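(* For every $M\geq 1$, $g(M)-h(M)$ equals the number of partitions in $\mathcal G_1(M)$ that have no part equal to $1$.
   Context: The perimeter of a nonempty partition $\lambda$ with largest part $\lambda_1$ and $\ell(\lambda)$ parts is $\lambda_1+\ell(\lambda)-1$. $\mathcal G(M)$ is the set of partitions into odd parts with perimeter $M$, $\mathcal H(M)$ the set of partitions into distinct parts with perimeter $M$; $g(M)$ (resp. $h(M)$) is the total number of parts, summed over all partitions in $\mathcal G(M)$ (resp. $\mathcal H(M)$). $\mathcal G_1(M)$ is the set of partitions with perimeter $M$ in which exactly one distinct even integer occurs as a part (possibly with multiplicity greater than one) and all other parts are odd. *)

From mathcomp Require Import all_boot.
Set Implicit Arguments. Unset Strict Implicit. Unset Printing Implicit Defensive.

Definition is_partition (l : seq nat) : bool :=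
  sorted geq l && all (fun x => 0 < x) l.

(* Perimeter of a nonempty partition: largest part + number of parts - 1.
   (The empty partition is never counted: we require l nonempty below.) *)
Definition perimeter (l : seq nat) : nat := head 0 l + size l - 1.

Definition has_perimeter (M : nat) (l : seq nat) : bool :=
  is_partition l && (l != [::]) && (perimeter l == M).

Definition in_G (M : nat) (l : seq nat) : bool := has_perimeter M l && all odd l.
Definition in_H (M : nat) (l : seq nat) : bool := has_perimeter M l && uniq l.
Definition in_G1 (M : nat) (l : seq nat) : bool :=
  has_perimeter M l && (size (undup [seq x <- l | ~~ odd x]) == 1).

(* Every partition of perimeter M has all parts <= M and at most M parts,
   so it is the list of nonzero entries of a nonincreasing M-tuple with
   entries in {0..M}; this correspondence is bijective on nonincreasing tuples. *)
Definition part_of_tuple (M : nat) (t : M.-tuple 'I_M.+1) : seq nat :=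
  [seq x <- [seq val i | i <- t] | 0 < x].

Definition tuple_ok (M : nat) (t : M.-tuple 'I_M.+1) : bool :=
  sorted geq [seq val i | i <- t].

Definition sum_bounded_parts (M : nat) (P : pred (seq nat)) (F : seq nat -> nat) : nat :=
  \sum_(t : M.-tuple 'I_M.+1 | tuple_ok t && P (part_of_tuple t)) F (part_of_tuple t).

Definition g (M : nat) : nat := sum_bounded_parts M (in_G M) size.
Definition h (M : nat) : nat := sum_bounded_parts M (in_H M) size.
Definition G1_no_one (M : nat) : nat :=
  sum_bounded_parts M (fun l => in_G1 M l && (1 \notin l)) (fun _ => 1).

(* A partition of perimeter N+2 arises from a smaller partition by one of two moves
   on its largest part a: [push_top k] adds a new largest part a+k (perimeter +k+1,
   one more part) and [bump_top k] replaces a by a+k (perimeter +k, same number of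
   parts).  Which move applies, and to which set, is decided by the gap between the two
   largest parts; writing X(N) for the members of X of perimeter N,
     G(N+2) = push_top 0 G(N+1) + bump_top 2 G(N),
     H(N+2) = push_top 1 H(N) + bump_top 1 H(N+1),
     K(N+2) = push_top 0 K(N+1) + push_top 1 K_even(N) + bump_top 2 K_odd(N)
              + bump_top 1 T(N+1),
   where K is G_1 without a part 1, split by the parity of the largest part, and T is
   the set of odd partitions in which 1 can only be the largest part.  Removing 2 from
   every part maps T(N+2) onto G(N), so |T(N+1)| = |G(N+1)| - |G(N)|.  Hence |G| and
   |H| both satisfy the Fibonacci recursion, and
     g(N+2) = g(N+1) + g(N) + |G(N+1)|,   h(N+2) = h(N+1) + h(N) + |H(N)|,
     |K(N+2)| = |K(N+1)| + |K(N)| + |G(N+1)| - |G(N)|,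
   so g - h and |K| obey the same recursion with the same initial values. *)

From mathcomp Require Import all_boot zify.
Set Implicit Arguments. Unset Strict Implicit. Unset Printing Implicit Defensive.

Lemma geq_trans : transitive geq.
Proof. exact: rev_trans leq_trans. Qed.

Lemma geq_anti : antisymmetric geq.
Proof. by move=> m n /andP[mn nm]; apply/anti_leq/andP. Qed.

Lemma has_perimeter_cons N a s : has_perimeter N (a :: s) =
  [&& 0 < a, path geq a s, all (fun x => 0 < x) s & a + size s == N].
Proof.
rewrite /has_perimeter /is_partition /perimeter /= subn1 addnS /=.
by case: (0 < a); case: (path geq a s); case: (all _ s).
Qed.

Lemma has_perimeter_nil N : has_perimeter N [::] = false.
Proof. by rewrite /has_perimeter andbF. Qed.

Lemma has_perimeter_sorted N l : has_perimeter N l -> sorted geq l.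
Proof. by case/andP=> /andP[/andP[]]. Qed.

Lemma sorted_le_head (l : seq nat) x : sorted geq l -> x \in l -> x <= head 0 l.
Proof.
case: l => [|a s] //= sorted_s.
by rewrite inE => /predU1P[->//|/(allP (order_path_min geq_trans sorted_s))].
Qed.

Lemma behead_le_head N a s x : has_perimeter N (a :: s) -> x \in s -> x <= head 0 s.
Proof. by move/has_perimeter_sorted/path_sorted; apply: sorted_le_head. Qed.

Lemma head_behead_le N l : has_perimeter N l -> head 0 (behead l) <= head 0 l.
Proof.
case: l => [|a [|b s]]; rewrite ?has_perimeter_nil // has_perimeter_cons.
by case/and3P=> _ /andP[].
Qed.

Lemma head_behead_lt N a s : has_perimeter N (a :: s) -> a \notin s -> head 0 s < a.
Proof.
rewrite has_perimeter_cons => /and4P[a_gt0 sorted_s _ _].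
case: s sorted_s => [|b s] //= /andP[b_le_a _]; rewrite inE negb_or ltn_neqAle b_le_a.
by case/andP=> /negbTE; rewrite eq_sym => ->.
Qed.

Lemma has_perimeter1 l : has_perimeter 1 l = (l == [:: 1]).
Proof.
case: l => [|a s]; rewrite ?has_perimeter_nil // has_perimeter_cons eqseq_cons.
case: a => [|[|a]] //=; last by rewrite addSn !andbF.
by case: s => //= b s; rewrite add1n !andbF.
Qed.

Lemma perm_filter_pos (s : seq nat) :
  perm_eq s ([seq x <- s | 0 < x] ++ nseq (size s - size [seq x <- s | 0 < x]) 0).
Proof.
rewrite -{1}(perm_filterC (fun x => 0 < x) s) perm_cat2l.
have /all_pred1P -> : all (pred1 0) [seq x <- s | predC (fun x => 0 < x) x].
  by rewrite all_filter; apply/allP => -[].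
by rewrite !size_filter -(count_predC (fun x => 0 < x)) addKn.
Qed.

Definition perimeter_partitions (M : nat) : seq (seq nat) :=
  [seq l <- [seq part_of_tuple t | t <- index_enum (M.-tuple 'I_M.+1) & tuple_ok t]
     | has_perimeter M l].

(* Two nonincreasing tuples with the same positive entries have the same number of
   zeros, so they are permutations of each other and hence equal. *)
Lemma perimeter_partitions_uniq M : uniq (perimeter_partitions M).
Proof.
apply/filter_uniq; rewrite map_inj_in_uniq ?filter_uniq ?index_enum_uniq //.
move=> t1 t2; rewrite !mem_filter => /andP[ok1 _] /andP[ok2 _] eq_pos.
apply/val_inj/(inj_map val_inj)/(sorted_eq geq_trans geq_anti ok1 ok2).
rewrite (permPl (perm_filter_pos _)) (permPr (perm_filter_pos _)).
by rewrite /part_of_tuple in eq_pos; rewrite eq_pos !size_map !size_tuple.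
Qed.

Lemma mem_perimeter_partitions M l :
  (l \in perimeter_partitions M) = has_perimeter M l.
Proof.
rewrite mem_filter; apply/andb_idr; case: l => [|a s]; first by rewrite has_perimeter_nil.
rewrite has_perimeter_cons => /and4P[a_gt0 sorted_s pos_s /eqP perim].
have le_s_a := order_path_min geq_trans sorted_s.
pose z := (a :: s) ++ nseq (M - (size s).+1) 0.
have size_z : size [seq inord x : 'I_M.+1 | x <- z] == M.
  by rewrite size_map size_cat size_nseq /=; apply/eqP; lia.
have val_z : [seq val i | i <- Tuple size_z] = z.
  rewrite -map_comp map_id_in // => x; rewrite mem_cat => x_in; apply: inordK.
  case/orP: x_in => [/predU1P[->|xs]|/nseqP[-> _]] //; first lia.
  by have := allP le_s_a x xs; rewrite /=; lia.
apply/mapP; exists (Tuple size_z).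
  rewrite mem_filter mem_index_enum andbT /tuple_ok val_z /= cat_path sorted_s /=.
  by elim: (M - _) (last a s) => //= n IH x; rewrite IH andbT.
rewrite /part_of_tuple val_z filter_cat /= a_gt0 (all_filterP pos_s).
by rewrite (eq_in_filter (a2 := pred0)) ?filter_pred0 ?cats0 // => x /nseqP[->].
Qed.

Lemma sum_bounded_partsE M (P : pred (seq nat)) (F : seq nat -> nat) :
  sum_bounded_parts M (fun l => has_perimeter M l && P l) F =
  \sum_(l <- perimeter_partitions M | P l) F l.
Proof.
by rewrite /sum_bounded_parts big_filter_cond big_map big_filter_cond.
Qed.

Lemma perimeter_sum0 (P : pred (seq nat)) (F : seq nat -> nat) :
  \sum_(l <- perimeter_partitions 0 | P l) F l = 0.
Proof.
case E: (perimeter_partitions 0) => [|l ?]; first by rewrite big_nil.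
have : l \in perimeter_partitions 0 by rewrite E mem_head.
rewrite mem_perimeter_partitions.
by case: l {E} => [|a s]; rewrite ?has_perimeter_nil // has_perimeter_cons => /and4P[]; lia.
Qed.

Lemma perimeter_sum1 (P : pred (seq nat)) (F : seq nat -> nat) :
  \sum_(l <- perimeter_partitions 1 | P l) F l = if P [:: 1] then F [:: 1] else 0.
Proof.
have -> : perimeter_partitions 1 = [:: [:: 1]].
  apply: perm_small_eq => //; apply: uniq_perm => // [|l].
    exact: perimeter_partitions_uniq.
  by rewrite mem_perimeter_partitions has_perimeter1 inE.
by rewrite big_cons big_nil addn0.
Qed.

Lemma perimeter_sum_reindex N N' (P P' : pred (seq nat)) (f f' : seq nat -> seq nat)
    (F : seq nat -> nat) :
  (forall s, has_perimeter N' s -> P' s ->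
     [/\ has_perimeter N (f s), P (f s) & f' (f s) = s]) ->
  (forall l, has_perimeter N l -> P l ->
     [/\ has_perimeter N' (f' l), P' (f' l) & f (f' l) = l]) ->
  \sum_(l <- perimeter_partitions N | P l) F l =
  \sum_(s <- perimeter_partitions N' | P' s) F (f s).
Proof.
move=> f_into f'_into; rewrite -big_filter -[RHS]big_filter -(big_map f xpredT).
have uniq_pp := perimeter_partitions_uniq.
apply/perm_big/uniq_perm; first exact/filter_uniq/uniq_pp.
  rewrite map_inj_in_uniq; first exact/filter_uniq/uniq_pp.
  move=> s1 s2; rewrite !(mem_filter P') !mem_perimeter_partitions.
  move=> /andP[P's1 hp1] /andP[P's2 hp2] eq_f.
  by have [_ _ <-] := f_into _ hp1 P's1; have [_ _ <-] := f_into _ hp2 P's2; rewrite eq_f.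
move=> l; rewrite (mem_filter P) mem_perimeter_partitions; apply/andP/mapP.
  case=> Pl /f'_into/(_ Pl)[hp P'l fK]; exists (f' l) => //.
  by rewrite (mem_filter P') mem_perimeter_partitions P'l.
case=> s; rewrite (mem_filter P') mem_perimeter_partitions => /andP[P's /f_into].
by case/(_ P's) => hp Pfs _ ->.
Qed.

Definition push_top (k : nat) (l : seq nat) : seq nat := (head 0 l + k) :: l.

Definition bump_top (k : nat) (l : seq nat) : seq nat :=
  if l is a :: s then (a + k) :: s else [::].

Definition lower_top (k : nat) (l : seq nat) : seq nat :=
  if l is a :: s then (a - k) :: s else [::].

(* For a single part [a] the gap is [a] itself. *)
Definition top_gap (l : seq nat) : nat := head 0 l - head 0 (behead l).

Lemma size_push_top k l : size (push_top k l) = size l + 1.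
Proof. by rewrite addn1. Qed.

Lemma size_bump_top k l : size (bump_top k l) = size l.
Proof. by case: l. Qed.

Lemma has_perimeter_push_top k N l :
  has_perimeter (k + N).+1 (push_top k l) = has_perimeter N l.
Proof.
case: l => [|a s]; rewrite /push_top has_perimeter_cons /=.
  by rewrite has_perimeter_nil; apply/negbTE; rewrite negb_and; lia.
rewrite has_perimeter_cons leq_addr /= addn_gt0 addnS eqSS addnAC [k + N]addnC eqn_add2r.
by case: (0 < a); rewrite ?andbF.
Qed.

Lemma has_perimeter_bump_top k N l :
  has_perimeter N l -> has_perimeter (k + N) (bump_top k l).
Proof.
case: l => [|a s]; rewrite ?has_perimeter_nil //= !has_perimeter_cons.
case/and4P=> a_gt0 sorted_s -> /eqP <-.
rewrite addn_gt0 a_gt0 addnAC [a + size s + k]addnC eqxx.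
by rewrite (path_le geq_trans _ sorted_s) //= leq_addr.
Qed.

Lemma has_perimeter_lower_top k N l :
  has_perimeter (k + N) l -> k < head 0 l -> k + head 0 (behead l) <= head 0 l ->
  has_perimeter N (lower_top k l).
Proof.
case: l => [|a s]; rewrite ?has_perimeter_nil //= !has_perimeter_cons.
case/and4P=> _ sorted_s -> /eqP perim k_lt_a le_head.
apply/and4P; split=> //; [lia | | apply/eqP; lia].
by case: s sorted_s le_head {perim} => //= b s /andP[_ ->]; rewrite andbT; lia.
Qed.

Lemma push_top_gap N l : has_perimeter N l -> push_top (top_gap l) (behead l) = l.
Proof.
move=> hp; have := head_behead_le hp.
by case: l hp => [|a s]; rewrite ?has_perimeter_nil // /push_top /top_gap /= => _ /subnKC->.
Qed.

Lemma perimeter_sum_push_top (F : seq nat -> nat) k N (P Q : pred (seq nat)) :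
  (forall s, has_perimeter N s -> Q (push_top k s) = P s) ->
  \sum_(l <- perimeter_partitions (k + N).+1 | Q l && (top_gap l == k)) F l =
  \sum_(s <- perimeter_partitions N | P s) F (push_top k s).
Proof.
move=> QP; apply: (perimeter_sum_reindex (f' := behead)).
  move=> s hp Ps; rewrite has_perimeter_push_top QP //.
  by split=> //; rewrite Ps /top_gap /= addKn eqxx.
move=> l hp /andP[Ql /eqP gap_k].
have push_l : push_top k (behead l) = l by rewrite -gap_k (push_top_gap hp).
have hp' : has_perimeter N (behead l) by rewrite -(has_perimeter_push_top k) push_l.
by rewrite -QP // push_l.
Qed.

Lemma perimeter_sum_bump_top (F : seq nat -> nat) k N (P Q : pred (seq nat)) :
  (forall s, has_perimeter N s -> P s -> Q (bump_top k s)) ->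
  (forall l, has_perimeter (k + N) l -> Q l ->
     [&& k < head 0 l, k + head 0 (behead l) <= head 0 l & P (lower_top k l)]) ->
  \sum_(l <- perimeter_partitions (k + N) | Q l) F l =
  \sum_(s <- perimeter_partitions N | P s) F (bump_top k s).
Proof.
move=> PQ QP; apply: (perimeter_sum_reindex (f' := lower_top k)).
  move=> s hp Ps; split; [exact: has_perimeter_bump_top | exact: PQ |].
  by case: s hp {Ps} => [|a s]; rewrite ?has_perimeter_nil //= addnK.
move=> l hp Ql; have /and3P[k_lt_a k_le_gap Pl] := QP l hp Ql.
split; [exact: has_perimeter_lower_top | by [] |].
by case: l {hp Ql Pl} k_lt_a k_le_gap => [|a s] //= /ltnW k_le_a _; rewrite subnK.
Qed.

Lemma odd_gap a b : odd a -> odd b -> b < a -> b.+2 <= a.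
Proof.
move=> odd_a odd_b; have := odd_double_half a; have := odd_double_half b.
rewrite odd_a odd_b; lia.
Qed.

Lemma odd_sum_rec N (F : seq nat -> nat) :
  \sum_(l <- perimeter_partitions N.+2 | all odd l) F l =
  \sum_(s <- perimeter_partitions N.+1 | all odd s) F (push_top 0 s) +
  \sum_(s <- perimeter_partitions N | all odd s) F (bump_top 2 s).
Proof.
rewrite (bigID (fun l => top_gap l == 0)) /=; congr (_ + _).
  by apply: (@perimeter_sum_push_top F 0 N.+1) => -[|a s] _ //=; rewrite addn0 andbA andbb.
apply: (@perimeter_sum_bump_top F 2 N) => -[|a s] hp; rewrite ?has_perimeter_nil //=.
  move/head_behead_le: hp => /= le_head /andP[odd_a ->].
  by rewrite addn2 /= odd_a /top_gap /= subn_eq0 -ltnNge ltnS (leq_trans le_head).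
rewrite /top_gap /= -lt0n subn_gt0 => /andP[/andP[odd_a odd_s] lt_head].
have [a_gt2 gap2] : 2 < a /\ 2 + head 0 s <= a.
  case: s hp odd_s lt_head => [|b s] hp /=.
    move=> _ _; have a_gt1 : 1 < a.
      by move: hp; rewrite has_perimeter_cons addn0 => /and4P[_ _ _ /eqP->].
    by have a_gt2 := odd_gt2 odd_a a_gt1; rewrite addn0 a_gt2 ltnW.
  case/andP=> odd_b _ /(odd_gap odd_a odd_b) gap2.
  by have := odd_gt0 odd_b; split; lia.
by rewrite a_gt2 gap2 oddB 1?ltnW // addbF odd_a.
Qed.

Lemma distinct_sum_rec N (F : seq nat -> nat) :
  \sum_(l <- perimeter_partitions N.+2 | uniq l) F l =
  \sum_(s <- perimeter_partitions N | uniq s) F (push_top 1 s) +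
  \sum_(s <- perimeter_partitions N.+1 | uniq s) F (bump_top 1 s).
Proof.
rewrite (bigID (fun l => top_gap l == 1)) /=; congr (_ + _).
  apply: (@perimeter_sum_push_top F 1 N) => s hp; rewrite /push_top [uniq (_ :: s)]/=.
  suff -> : (head 0 s + 1 \in s) = false by [].
  apply/negbTE/negP => /(sorted_le_head (has_perimeter_sorted hp)).
  by rewrite addn1 ltnn.
apply: (@perimeter_sum_bump_top F 1 N.+1) => -[|a s] hp; rewrite ?has_perimeter_nil //.
  rewrite cons_uniq => /andP[a_notin_s uniq_s]; have := head_behead_lt hp a_notin_s.
  rewrite /top_gap /= uniq_s andbT => head_lt; apply/andP; split; last lia.
  by apply/negP => /(behead_le_head hp); lia.
rewrite cons_uniq /top_gap /= => /andP[/andP[a_notin_s ->] gap_ne1].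
have := head_behead_lt hp a_notin_s; rewrite andbT => head_lt.
by apply/and3P; split; [lia | lia | apply/negP => /(behead_le_head hp); lia].
Qed.

Definition one_even_value (l : seq nat) : bool :=
  size (undup [seq x <- l | ~~ odd x]) == 1.

Lemma size_undup_cons_eq1 (T : eqType) (a : T) s :
  (size (undup (a :: s)) == 1) = all (pred1 a) s.
Proof.
apply/idP/all_pred1P => [size1 | ->]; last by elim: (size s) => //= n; rewrite inE eqxx.
apply/all_pred1P/allP => x xs; apply: contraLR size1 => x_neq_a.
have : 2 <= size (undup (a :: s)).
  apply: (@uniq_leq_size _ [:: a; x]); first by rewrite /= inE eq_sym x_neq_a.
  by move=> y; rewrite mem_undup !inE => /predU1P[->|/eqP->]; rewrite ?eqxx ?xs ?orbT.
by case: (size _) => [|[|]].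
Qed.

Lemma one_even_value_cons_odd a s : odd a -> one_even_value (a :: s) = one_even_value s.
Proof. by rewrite /one_even_value /= => ->. Qed.

Lemma one_even_value_cons_even a s : ~~ odd a ->
  one_even_value (a :: s) = all (fun x => odd x || (x == a)) s.
Proof.
rewrite /one_even_value /= => ->; rewrite size_undup_cons_eq1 all_filter.
by apply: eq_all => x /=; case: (odd x).
Qed.

Lemma one_even_value_twin a s : one_even_value (a :: a :: s) = one_even_value (a :: s).
Proof. by rewrite /one_even_value /=; case: (odd a) => //=; rewrite inE eqxx. Qed.

Definition one_even_no_one (l : seq nat) : bool := one_even_value l && (1 \notin l).

Definition odd_tail_no_one (l : seq nat) : bool := all odd l && (1 \notin behead l).

Lemma one_even_twin_sum N (F : seq nat -> nat) :
  \sum_(l <- perimeter_partitions N.+2 | one_even_no_one l && (top_gap l == 0)) F l =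
  \sum_(s <- perimeter_partitions N.+1 | one_even_no_one s) F (push_top 0 s).
Proof.
apply: (@perimeter_sum_push_top F 0 N.+1) => -[|a s] _ //.
by rewrite /one_even_no_one /push_top addn0 one_even_value_twin /= !inE; case: (1 == a).
Qed.

Lemma one_even_odd_gap1_sum N (F : seq nat -> nat) :
  \sum_(l <- perimeter_partitions N.+2 |
          one_even_no_one l && (top_gap l != 0) && odd (head 0 l) && (top_gap l == 1)) F l =
  \sum_(s <- perimeter_partitions N | one_even_no_one s && ~~ odd (head 0 s)) F (push_top 1 s).
Proof.
apply: (@perimeter_sum_push_top F 1 N) => -[|a s] hp //.
rewrite /one_even_no_one /push_top /top_gap /= addKn andbT addn1 /=.
have a_gt0 : 0 < a by move: hp; rewrite has_perimeter_cons => /andP[].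
case: (boolP (odd a)) => odd_a; rewrite ?andbF // one_even_value_cons_odd //.
by rewrite [1 \in _ :: a :: s]in_cons eqSS eq_sym (negbTE (lt0n_neq0 a_gt0)).
Qed.

Lemma one_even_odd_gap2_sum N (F : seq nat -> nat) :
  \sum_(l <- perimeter_partitions N.+2 |
          one_even_no_one l && (top_gap l != 0) && odd (head 0 l) && (top_gap l != 1)) F l =
  \sum_(s <- perimeter_partitions N | one_even_no_one s && odd (head 0 s)) F (bump_top 2 s).
Proof.
apply: (@perimeter_sum_bump_top F 2 N) => -[|a s] hp; rewrite ?has_perimeter_nil //.
  move=> /andP[/andP[even1 no1] odd_a]; have le_head : head 0 s <= a := head_behead_le hp.
  have odd_a2 : odd (a + 2) by rewrite oddD odd_a.
  move: no1; rewrite /one_even_no_one /= /top_gap /= (one_even_value_cons_odd _ odd_a2) odd_a2.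
  rewrite -(one_even_value_cons_odd s odd_a) even1 !inE !negb_or => /andP[_ ->].
  rewrite !andbT; lia.
move=> /andP[/andP[/andP[/andP[even1 no1] gap0] odd_a] gap1].
case: s hp even1 no1 gap0 gap1 odd_a => [|b s] hp even1 /=.
  by move=> _ _ _ odd_a; rewrite one_even_value_cons_odd in even1.
rewrite /top_gap /= !inE !negb_or => /and3P[_ b_ne1 no1] gap0 gap1 odd_a.
have b_gt0 : 0 < b by move: hp; rewrite has_perimeter_cons => /and4P[_ _ /andP[]].
have b_le_a : b <= a := head_behead_le hp.
have odd_a2 : odd (a - 2) by rewrite oddB ?addbF //; lia.
rewrite one_even_value_cons_odd // in even1.
rewrite /one_even_no_one one_even_value_cons_odd // even1 odd_a2.
by rewrite !inE (negbTE no1) orbF andbT; lia.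
Qed.

Lemma one_even_even_top_sum N (F : seq nat -> nat) :
  \sum_(l <- perimeter_partitions N.+2 |
          one_even_no_one l && (top_gap l != 0) && ~~ odd (head 0 l)) F l =
  \sum_(s <- perimeter_partitions N.+1 | odd_tail_no_one s) F (bump_top 1 s).
Proof.
apply: (@perimeter_sum_bump_top F 1 N.+1) => -[|a s] hp; rewrite ?has_perimeter_nil //.
  rewrite /odd_tail_no_one /= => /andP[/andP[odd_a odd_s] no1].
  have head_le : head 0 s <= a := head_behead_le hp.
  have a_gt0 := odd_gt0 odd_a; have even_a1 : ~~ odd (a + 1) by rewrite addn1 /= odd_a.
  rewrite /one_even_no_one /= /top_gap /= one_even_value_cons_even // even_a1.
  rewrite inE (negbTE no1) !andbT orbF (sub_all _ odd_s) => [|x /= ->] //; lia.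
rewrite /one_even_no_one => /andP[/andP[/andP[even1 /[!inE] /norP[a_ne1 no1]] gap0] /= even_a].
have a_gt1 : 1 < a.
  by move: hp; rewrite has_perimeter_cons; case: a even_a a_ne1 {gap0 even1} => [|[|]].
have head_lt : head 0 s < a by move: gap0; rewrite /top_gap /= subn_eq0 -ltnNge.
rewrite a_gt1 head_lt /odd_tail_no_one /= oddB 1?ltnW // addbT even_a no1 andbT /=.
rewrite one_even_value_cons_even // in even1; apply/allP => x xs.
have x_lt_a : x < a := leq_ltn_trans (behead_le_head hp xs) head_lt.
by have := allP even1 x xs; rewrite /= (ltn_eqF x_lt_a) orbF.
Qed.

Lemma one_even_sum_rec N (F : seq nat -> nat) :
  \sum_(l <- perimeter_partitions N.+2 | one_even_no_one l) F l =
  \sum_(s <- perimeter_partitions N.+1 | one_even_no_one s) F (push_top 0 s) +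
  \sum_(s <- perimeter_partitions N | one_even_no_one s && ~~ odd (head 0 s)) F (push_top 1 s) +
  \sum_(s <- perimeter_partitions N | one_even_no_one s && odd (head 0 s)) F (bump_top 2 s) +
  \sum_(s <- perimeter_partitions N.+1 | odd_tail_no_one s) F (bump_top 1 s).
Proof.
rewrite (bigID (fun l => top_gap l == 0)) /= one_even_twin_sum -!addnA; congr (_ + _).
rewrite (bigID (fun l => odd (head 0 l))) /= one_even_even_top_sum addnA; congr (_ + _).
by rewrite (bigID (fun l => top_gap l == 1)) /= one_even_odd_gap1_sum one_even_odd_gap2_sum.
Qed.

Lemma has_perimeter_map_addn k N l :
  has_perimeter N l -> has_perimeter (k + N) (map (addn k) l).
Proof.
case: l => [|a s]; rewrite ?has_perimeter_nil //= !has_perimeter_cons size_map.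
case/and4P=> a_gt0 sorted_s pos_s /eqP <-; rewrite ltn_addl // addnA eqxx andbT.
rewrite path_map (sub_path _ sorted_s) => [|x y /=]; last by rewrite leq_add2l.
by rewrite all_map; apply: sub_all pos_s => x /= /ltn_addl->.
Qed.

Lemma has_perimeter_map_subn k N l :
  has_perimeter (k + N) l -> all (fun x => k < x) l ->
  has_perimeter N (map (subn^~ k) l).
Proof.
case: l => [|a s]; rewrite ?has_perimeter_nil //= !has_perimeter_cons size_map.
case/and4P=> _ sorted_s _ /eqP perim /andP[k_lt_a k_lt_s].
rewrite subn_gt0 k_lt_a (@path_map _ _ (subn^~ k)).
rewrite (sub_path _ sorted_s) => [|x y /=]; last exact: leq_sub2r.
rewrite all_map (sub_all _ k_lt_s) => [|x /=]; last by rewrite subn_gt0.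
by apply/eqP; lia.
Qed.

Lemma odd_tail_no_one_gt2 N l :
  has_perimeter N.+2 l -> all odd l -> 1 \notin behead l -> all (fun x => 2 < x) l.
Proof.
case: l => [|a s] hp; rewrite ?has_perimeter_nil //= => /andP[odd_a odd_s] no1.
have s_gt2 : all (fun x => 2 < x) s.
  apply/allP => x xs; have odd_x := allP odd_s x xs.
  have x_gt0 := odd_gt0 odd_x; apply: (odd_gt2 odd_x).
  by rewrite ltn_neqAle x_gt0 andbT; apply: contraNneq no1 => ->.
rewrite s_gt2 andbT; have := head_behead_le hp.
case: s hp s_gt2 odd_s no1 => [|b s] hp /=; last by move=> /andP[b_gt2 _] _ _; apply: leq_trans.
move: hp; rewrite has_perimeter_cons addn0 => /and4P[_ _ _ /eqP a_eq _ _ _ _].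
by apply: (odd_gt2 odd_a); rewrite a_eq.
Qed.

Lemma odd_tail_no_one_sum_shift N (F : seq nat -> nat) :
  \sum_(l <- perimeter_partitions N.+2 | odd_tail_no_one l) F l =
  \sum_(s <- perimeter_partitions N | all odd s) F (map (addn 2) s).
Proof.
apply: (perimeter_sum_reindex (f' := map (subn^~ 2))).
  move=> s hp odd_s; split; [exact: has_perimeter_map_addn | | exact: mapK (addKn 2) s].
  rewrite /odd_tail_no_one all_map behead_map (sub_all _ odd_s) => [|x /= odd_x].
    by apply/mapP => -[x _]; rewrite add2n.
  by rewrite oddD odd_x.
move=> l hp /andP[odd_l no1]; have gt2 := odd_tail_no_one_gt2 hp odd_l no1.
split; first exact: has_perimeter_map_subn.
  rewrite all_map; apply/allP => x xl /=; have x_gt2 := allP gt2 x xl.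
  by rewrite oddB 1?ltnW // (allP odd_l x xl).
by rewrite -map_comp map_id_in // => x xl; apply/subnKC/ltnW/(allP gt2).
Qed.

Definition odd_count (N : nat) : nat := \sum_(l <- perimeter_partitions N | all odd l) 1.

Definition distinct_count (N : nat) : nat := \sum_(l <- perimeter_partitions N | uniq l) 1.

Lemma gE N : g N = \sum_(l <- perimeter_partitions N | all odd l) size l.
Proof. exact: sum_bounded_partsE. Qed.

Lemma hE N : h N = \sum_(l <- perimeter_partitions N | uniq l) size l.
Proof. exact: sum_bounded_partsE. Qed.

Lemma G1_no_oneE N :
  G1_no_one N = \sum_(l <- perimeter_partitions N | one_even_no_one l) 1.
Proof.
rewrite -sum_bounded_partsE; apply: eq_bigl => t.
by rewrite /in_G1 -!andbA.
Qed.

Lemma g_rec N : g N.+2 = g N.+1 + g N + odd_count N.+1.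
Proof.
rewrite !gE odd_sum_rec /odd_count.
under eq_bigr do rewrite size_push_top.
under [X in _ + X]eq_bigr do rewrite size_bump_top.
by rewrite big_split addnAC.
Qed.

Lemma h_rec N : h N.+2 = h N.+1 + h N + distinct_count N.
Proof.
rewrite !hE distinct_sum_rec /distinct_count.
under eq_bigr do rewrite size_push_top.
under [X in _ + X]eq_bigr do rewrite size_bump_top.
by rewrite big_split addnC addnA.
Qed.

Lemma odd_count_rec N : odd_count N.+2 = odd_count N.+1 + odd_count N.
Proof. exact: odd_sum_rec. Qed.

Lemma distinct_count_rec N : distinct_count N.+2 = distinct_count N.+1 + distinct_count N.
Proof. by rewrite /distinct_count distinct_sum_rec addnC. Qed.

Lemma distinct_countE N : distinct_count N = odd_count N.
Proof.
suff: distinct_count N = odd_count N /\ distinct_count N.+1 = odd_count N.+1 by case.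
elim: N => [|N [IH0 IH1]].
  by rewrite /distinct_count /odd_count !perimeter_sum0 !perimeter_sum1.
by rewrite distinct_count_rec odd_count_rec IH0 IH1.
Qed.

Lemma odd_tail_no_one_count N :
  \sum_(l <- perimeter_partitions N.+1 | odd_tail_no_one l) 1 + odd_count N =
  odd_count N.+1.
Proof.
case: N => [|N]; first by rewrite /odd_count !perimeter_sum1 perimeter_sum0.
by rewrite (odd_tail_no_one_sum_shift N (fun=> 1)) odd_count_rec addnC.
Qed.

Lemma G1_no_one_rec N :
  G1_no_one N.+2 + odd_count N = G1_no_one N.+1 + G1_no_one N + odd_count N.+1.
Proof.
rewrite !G1_no_oneE (one_even_sum_rec N (fun=> 1)) -odd_tail_no_one_count.
by rewrite [X in _ = _ + X + _](bigID (fun l => odd (head 0 l))) /=; lia.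
Qed.

Theorem mainTheorem7 (M : nat) : 1 <= M -> g M = h M + G1_no_one M.
Proof.
move=> _.
suff: g M = h M + G1_no_one M /\ g M.+1 = h M.+1 + G1_no_one M.+1 by case.
elim: M => [|N [IH0 IH1]].
  by rewrite !gE !hE !G1_no_oneE !perimeter_sum0 !perimeter_sum1.
split=> //; have := G1_no_one_rec N; rewrite g_rec h_rec distinct_countE; lia.
Qed.
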